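(* Let $p\ge2$ and $n,\ell,t$ be positive integers with $n>\ell$. For each $0\le r\le n-\ell$ let $\xi_r$ be a prime with $\max(t,r)<\xi_r\le2\max(t,r)$, and let $\mathbf{a}_r^*\in\{0,\dots,\xi_r-1\}^t$ maximize $|\mathcal{C}_{p,t,\ell}(n-\ell,r,\mathbf{a},\xi_r)|$ over $\mathbf{a}\in\{0,\dots,\xi_r-1\}^t$. Define $$\mathcal{C}^1=\bigl\{\phi^{-1}(\mathbf{y},\mathbf{z}):\ \mathbf{y}\in\mathbb{Z}_p^\ell,\ \mathbf{z}\in\mathcal{C}_{p,t,\ell}(n-\ell,r,\mathbf{a}_r^*,\xi_r)\text{ where }r=\mathrm{wt}_H(\mathbf{z})\bigr\}.$$ Then $$|\mathcal{C}^1|\ge p^\ell\sum_{r=0}^{n-\ell}\frac{\binom{n-\ell}{r}(p-1)^r}{(2\max(t,r))^t}.$$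
   Context: $\mathbb{Z}_p=\{0,1,\dots,p-1\}$ with arithmetic mod $p$. The bijection $\phi:\mathbb{Z}_p^n\to\mathbb{Z}_p^\ell\times\mathbb{Z}_p^{n-\ell}$ is $\phi(\mathbf{x})=(\mathbf{y},\mathbf{z})$ with $\mathbf{y}=(x_1,\dots,x_\ell)$ and $z_i=x_{i+\ell}-x_i$ for $1\le i\le n-\ell$. Any $\mathbf{z}\in\mathbb{Z}_p^m$ of Hamming weight $r$ is written uniquely as $\mathbf{z}=0^{b_1}u_10^{b_2}u_2\cdots u_r0^{b_{r+1}}$ with $u_i\ne0$, $b_i\ge0$. For a prime $\xi$ and $\mathbf{a}\in\{0,\dots,\xi-1\}^t$, $$\mathcal{C}_{p,t,\ell}(m,r,\mathbf{a},\xi)=\Bigl\{\mathbf{z}\in\mathbb{Z}_p^m:\ \mathrm{wt}_H(\mathbf{z})=r,\ \sum_{i=1}^{r+1}i^q\Bigl\lfloor\frac{b_i}{\ell}\Bigr\rfloor\equiv a_q\pmod{\xi}\ \forall\,1\le q\le t\Bigr\}.$$ *)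

From HB Require Import structures.
From mathcomp Require Import all_boot all_order all_algebra.
From mathcomp Require Import zify.
Set Implicit Arguments. Unset Strict Implicit. Unset Printing Implicit Defensive.
Import Order.TTheory GRing.Theory Num.Theory.

(* Z_p is 'Z_p (valid since p >= 2 is assumed in the theorem). *)

Definition wtH (p m : nat) (z : {ffun 'I_m -> 'Z_p}) : nat :=
  #|[set i | z i != 0%R]|.

(* Zero runs: for a sequence z = 0^{b_1} u_1 0^{b_2} ... u_r 0^{b_{r+1}}
   (u_i <> 0), zruns z = [:: b_1; ...; b_{r+1}]. *)
Fixpoint zruns (s : seq nat) : seq nat :=
  match s with
  | [::] => [:: 0]
  | x :: s' => let r := zruns s' in
               if x == 0 then (head 0 r).+1 :: behead r else 0 :: r
  end.

Definition blocks (p m : nat) (z : {ffun 'I_m -> 'Z_p}) : seq nat :=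
  zruns [seq (val (z i)) | i <- enum 'I_m].

Definition blocksum (p m l q : nat) (z : {ffun 'I_m -> 'Z_p}) : nat :=
  \sum_(i < size (blocks z)) i.+1 ^ q * (nth 0 (blocks z) i %/ l).

(* C_{p,t,l}(m, r, a, xi); a q is the q-th coordinate (1 <= q <= t). *)
Definition CC (p t l m r : nat) (a : nat -> nat) (xi : nat) :
  {set {ffun 'I_m -> 'Z_p}} :=
  [set z | (wtH z == r) &&
           [forall q : 'I_t, @blocksum p m l q.+1 z == a q.+1 %[mod xi]]].

Lemma shift_lt (n l : nat) (i : 'I_(n - l)) : i + l < n.
Proof. have := ltn_ord i; lia. Qed.

Definition phiz (p n l : nat) (x : {ffun 'I_n -> 'Z_p}) :
  {ffun 'I_(n - l) -> 'Z_p} :=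
  [ffun i : 'I_(n - l) => (x (Ordinal (shift_lt i)) - x (widen_ord (leq_subr l n) i))%R].

(* C^1 = { phi^{-1}(y,z) : y arbitrary, z in C(n-l, wt z, a*_{wt z}, xi_{wt z}) },
   written as the preimage under the bijection phi. *)
Definition C1 (p n l t : nat) (xi : nat -> nat) (a : nat -> nat -> nat) :
  {set {ffun 'I_n -> 'Z_p}} :=
  [set x | let z := @phiz p n l x in
           z \in CC p t l (n - l) (wtH z) (a (wtH z)) (xi (wtH z))].
Arguments CC p t l m r a xi : clear implicits.
Arguments C1 p n l t xi a : clear implicits.

(** The difference map x |-> (y, z) is a bijection, so |C^1| is p^l times the
    number of difference vectors z lying in the code of their own weight, and
    these vectors split by weight into the codes C(n-l, r, a*_r, xi_r).  For a
    fixed weight r, the xi_r^t residue vectors of the block sums partition the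
    C(n-l, r) (p-1)^r vectors of weight r into the codes C(n-l, r, a, xi_r), so
    the largest one has at least C(n-l, r) (p-1)^r / xi_r^t elements; finally
    xi_r <= 2 max(t, r). *)

From HB Require Import structures.
From mathcomp Require Import all_boot all_order all_algebra zify.

Set Implicit Arguments.
Unset Strict Implicit.
Unset Printing Implicit Defensive.

Import Order.TTheory GRing.Theory Num.Theory.

Lemma card_Zp_gt1 (p : nat) : 1 < p -> #|'Z_p| = p.
Proof. by move=> p_gt1; rewrite card_ord Zp_cast. Qed.

Lemma card_ffun_support_eq (aT rT : finType) (y0 : rT) (A : {set aT}) :
  #|[set f : {ffun aT -> rT} | [set x | f x != y0] == A]| = #|rT|.-1 ^ #|A|.
Proof.
have card_neq : #|[pred y | y != y0]| = #|rT|.-1.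
  by rewrite -(cardC1 y0) /=; apply: eq_card => y; rewrite !inE.
rewrite -card_neq -(card_pffun_on y0); apply: eq_card => f; rewrite !inE.
apply/eqP/pffun_onP => [<- | [/supportP f0 fA]].
  split; first by apply/subsetP => x; rewrite !inE.
  by move=> _ /imageP [x + ->]; rewrite !inE.
apply/setP => x; rewrite inE.
have [xA | xNA] := boolP (x \in A); first by apply: fA; apply/imageP; exists x.
by rewrite f0 // eqxx.
Qed.

Lemma card_wtH (p m r : nat) : 1 < p ->
  #|[set z : {ffun 'I_m -> 'Z_p} | wtH z == r]| = 'C(m, r) * (p - 1) ^ r.
Proof.
move=> p_gt1; rewrite -sum1_card.
rewrite (partition_big (fun z : {ffun 'I_m -> 'Z_p} => [set i | z i != 0%R])
           (fun A : {set 'I_m} => #|A| == r)); last by move=> z; rewrite inE.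
rewrite (eq_bigr (fun _ => (p - 1) ^ r)) => [|A /eqP <-].
  rewrite sum_nat_const -[m in 'C(m, r)]card_ord -card_draws.
  by congr (_ * _); apply: eq_card => A; rewrite inE.
rewrite -[in RHS](card_Zp_gt1 p_gt1) subn1 -(card_ffun_support_eq 0%R) sum1dep_card.
by apply: eq_card => z; rewrite !inE /wtH andb_idl // => /eqP ->.
Qed.

Lemma card_le_fibers (T K : finType) (A : {set T}) (f : T -> K) (M : nat) :
  (forall k, #|[set x in A | f x == k]| <= M) -> #|A| <= #|K| * M.
Proof.
move=> fiberM; rewrite -sum1_card (partition_big f xpredT) //= -sum_nat_const.
apply: leq_sum => k _; rewrite sum1dep_card.
by apply: leq_trans (fiberM k); apply/subset_leq_card/subsetP => x; rewrite !inE.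
Qed.

Section ResidueClasses.

Variables (p t l m xi : nat).
Hypothesis xi_gt0 : 0 < xi.

Definition block_residues (z : {ffun 'I_m -> 'Z_p}) : {ffun 'I_t -> 'I_xi} :=
  [ffun q : 'I_t => Ordinal (ltn_pmod (blocksum l q.+1 z) xi_gt0)].

(* The parameter vector of [CC] is indexed from 1. *)
Definition residues_param (g : {ffun 'I_t -> 'I_xi}) (q : nat) : nat :=
  if insub q.-1 is Some i then val (g i) else 0.

Lemma residues_param_lt g q : residues_param g q < xi.
Proof. by rewrite /residues_param; case: insub => [i|] //; apply: ltn_ord. Qed.

Lemma block_residues_fiber_sub r g :
  [set z in [set z | wtH z == r] | block_residues z == g]
    \subset CC p t l m r (residues_param g) xi.
Proof.
apply/subsetP => z; rewrite !inE => /andP [-> /eqP <-] /=.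
by apply/forallP => q; rewrite /residues_param /= valK ffunE /= modn_mod.
Qed.

Lemma card_wtH_le_max_CC r (a : nat -> nat) :
  (forall a' : nat -> nat, (forall q, 1 <= q <= t -> a' q < xi) ->
     #|CC p t l m r a' xi| <= #|CC p t l m r a xi|) ->
  #|[set z : {ffun 'I_m -> 'Z_p} | wtH z == r]| <= xi ^ t * #|CC p t l m r a xi|.
Proof.
have -> : xi ^ t = #|{ffun 'I_t -> 'I_xi}| by rewrite card_ffun !card_ord.
move=> a_max.
apply: (card_le_fibers (f := block_residues)) => g.
apply: leq_trans (a_max _ (fun q _ => residues_param_lt g q)).
exact/subset_leq_card/block_residues_fiber_sub.
Qed.

End ResidueClasses.

Lemma card_CC_own_weight (p t l m : nat) (xi : nat -> nat) (a : nat -> nat -> nat) :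
  #|[set z : {ffun 'I_m -> 'Z_p} | z \in CC p t l m (wtH z) (a (wtH z)) (xi (wtH z))]|
    = \sum_(r < m.+1) #|CC p t l m r (a r) (xi r)|.
Proof.
have wtH_lt (z : {ffun 'I_m -> 'Z_p}) : wtH z < m.+1.
  by rewrite ltnS /wtH -[m in _ <= m]card_ord max_card.
rewrite -sum1_card (partition_big (fun z => Ordinal (wtH_lt z)) xpredT) //=.
apply: eq_bigr => r _; rewrite sum1dep_card; apply: eq_card => z; rewrite !inE.
rewrite -val_eqE /=.
by have [-> | _] := eqVneq (wtH z) r; rewrite ?eqxx ?andbT ?andbF.
Qed.

Section DifferenceMap.

Variables (p n l : nat).
Hypotheses (p_gt1 : 1 < p) (l_gt0 : 0 < l) (l_le_n : l <= n).

Definition phiy (x : {ffun 'I_n -> 'Z_p}) : {ffun 'I_l -> 'Z_p} :=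
  [ffun i => x (widen_ord l_le_n i)].

Definition phi (x : {ffun 'I_n -> 'Z_p}) := (phiy x, phiz l x).

(* For k >= l, x_k is recovered from x_(k-l) and z_(k-l). *)
Lemma phi_inj : injective phi.
Proof.
move=> x x' [/ffunP eq_y /ffunP eq_z]; apply/ffunP => -[k].
elim/ltn_ind: k => k IHk k_lt_n.
have [k_lt_l | l_le_k] := ltnP k l.
  have := eq_y (Ordinal k_lt_l); rewrite !ffunE.
  by have -> : widen_ord l_le_n (Ordinal k_lt_l) = Ordinal k_lt_n by apply: val_inj.
have j_lt : k - l < n - l by lia.
have := eq_z (Ordinal j_lt); rewrite !ffunE.
have -> : Ordinal (shift_lt (Ordinal j_lt)) = Ordinal k_lt_n.
  by apply: val_inj => /=; lia.
have j_lt_n : k - l < n by lia.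
have -> : widen_ord (leq_subr l n) (Ordinal j_lt) = Ordinal j_lt_n by apply: val_inj.
by rewrite (IHk (k - l)); [exact: addIr | lia].
Qed.

Lemma phi_bij : bijective phi.
Proof.
apply: (inj_card_bij phi_inj).
by rewrite card_prod !card_ffun !card_Zp_gt1 // !card_ord -expnD subnKC.
Qed.

Lemma card_preim_phiz (S : {set {ffun 'I_(n - l) -> 'Z_p}}) :
  #|phiz l @^-1: S| = p ^ l * #|S|.
Proof.
have -> : phiz l @^-1: S = phi @^-1: setX setT S.
  by apply/setP => x; rewrite !inE.
rewrite on_card_preimset; last exact: onW_bij phi_bij.
by rewrite cardsX cardsT card_ffun card_Zp_gt1 // card_ord.
Qed.

End DifferenceMap.

Lemma card_C1 (p n l t : nat) (xi : nat -> nat) (a : nat -> nat -> nat) :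
  1 < p -> 0 < l -> l <= n ->
  #|C1 p n l t xi a| = p ^ l * \sum_(r < (n - l).+1) #|CC p t l (n - l) r (a r) (xi r)|.
Proof.
move=> p_gt1 l_gt0 l_le_n.
rewrite -card_CC_own_weight -(card_preim_phiz p_gt1 l_gt0 l_le_n).
by apply: eq_card => x; rewrite inE [in RHS]inE [in RHS]in_set.
Qed.

Theorem lemma5 (p n l t : nat) (xi : nat -> nat) (a : nat -> nat -> nat) :
  2 <= p -> 0 < n -> 0 < l -> 0 < t -> l < n ->
  (forall r, r <= n - l ->
     prime (xi r) /\ maxn t r < xi r <= 2 * maxn t r) ->
  (forall r, r <= n - l ->
     (forall q, 1 <= q <= t -> a r q < xi r) /\
     (forall a' : nat -> nat, (forall q, 1 <= q <= t -> a' q < xi r) ->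
        #|CC p t l (n - l) r a' (xi r)| <= #|CC p t l (n - l) r (a r) (xi r)|)) ->
  ((p ^ l)%:R * \sum_(0 <= r < (n - l).+1)
       ('C(n - l, r) * (p - 1) ^ r)%:R / ((2 * maxn t r) ^ t)%:R
    <= (#|C1 p n l t xi a|)%:R :> rat)%R.
Proof.
move=> p_gt1 _ l_gt0 t_gt0 l_lt_n xi_bounds a_max.
rewrite (card_C1 t xi a p_gt1 l_gt0 (ltnW l_lt_n)) natrM natr_sum big_mkord.
apply: ler_wpM2l => //; apply: ler_sum => -[r /=]; rewrite ltnS => r_le _.
(* Only 0 < xi r <= 2 max(t, r) is used, not the primality of xi r. *)
have [_ /andP [max_lt_xi xi_le]] := xi_bounds r r_le.
have xi_gt0 : 0 < xi r by apply: leq_ltn_trans max_lt_xi.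
rewrite ler_pdivrMr ?ltr0n ?expn_gt0 ?(leq_trans xi_gt0) // -natrM ler_nat.
rewrite -card_wtH // mulnC.
apply: leq_trans (card_wtH_le_max_CC xi_gt0 (a_max r r_le).2) _.
by rewrite leq_mul2r leq_exp2r ?xi_le ?orbT.
Qed.
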